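(* Let $\lambda$ be a nonzero real number, $x$ real, and $n\ge0$ an integer. Then $$\beta_{n,\lambda}(x)=\sum_{j=0}^{n}\frac{\lambda^{j}(1)_{j+1,\frac{1}{\lambda}}}{j+1}\sum_{k=j}^{n}\binom{n}{k}S_{2,\lambda}(k,j)\,(x)_{n-k,\lambda}.$$
   Context: For real $y$, $\mu\neq 0$ and integer $k\ge0$: $(y)_{0,\mu}=1$, $(y)_{k,\mu}=y(y-\mu)\cdots(y-(k-1)\mu)$ (used with $\mu=\lambda$ and $\mu=1/\lambda$); $(y)_0=1$, $(y)_k=y(y-1)\cdots(y-k+1)$. The degenerate exponential is $e_\lambda^x(t)=\sum_{k\ge0}(x)_{k,\lambda}t^k/k!=(1+\lambda t)^{x/\lambda}$, $e_\lambda(t)=e^1_\lambda(t)$. The degenerate Bernoulli polynomials are defined by $\frac{t}{e_\lambda(t)-1}e_\lambda^x(t)=\sum_{n\ge0}\beta_{n,\lambda}(x)\frac{t^n}{n!}$. The degenerate Stirling numbers of the second kind are defined by $(x)_{n,\lambda}=\sum_{k=0}^{n}S_{2,\lambda}(n,k)(x)_{k}$ ($n\ge0$). *)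

From HB Require Import structures.
From mathcomp Require Import all_boot all_order all_algebra.
From mathcomp Require Export reals.
Set Implicit Arguments. Unset Strict Implicit. Unset Printing Implicit Defensive.
Import Order.TTheory GRing.Theory Num.Theory.
Local Open Scope ring_scope.

Definition dfall {R : realType} (y mu : R) (k : nat) : R :=
  \prod_(i < k) (y - i%:R * mu).

Definition ffall {R : realType} (y : R) (k : nat) : R := dfall y 1 k.

(* b is the sequence of degenerate Bernoulli polynomials beta_{n,lam}(x):
   the generating-function identity  t/(e_lam(t)-1) e_lam^x(t) = sum b_n t^n/n!
   multiplied out as the formal power series identity
   (e_lam(t) - 1) * (sum_n b_n t^n/n!) = t * e_lam^x(t),
   compared coefficientwise on t^m/m!  (e_lam(t)-1 = sum_{k>=1} (1)_{k,lam} t^k/k!,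
   t e_lam^x(t) = sum_m m (x)_{m-1,lam} t^m/m!).  Since e_lam(t)-1 = t + O(t^2)
   this determines b uniquely. *)
Definition is_degBernoulli {R : realType} (lam x : R) (b : nat -> R) : Prop :=
  forall m : nat,
    \sum_(k < m.+1) 'C(m, k)%:R * (dfall 1 lam k - ((k : nat) == 0%N)%:R) * b (m - k)%N
    = m%:R * dfall x lam m.-1.

Definition is_degStirling2 {R : realType} (lam : R) (S : nat -> nat -> R) : Prop :=
  forall (n : nat) (y : R), dfall y lam n = \sum_(k < n.+1) S n k * ffall y k.

From HB Require Import structures.
From mathcomp Require Import all_boot all_order all_algebra.
From mathcomp Require Import reals.
From mathcomp Require Import ring.
Import Order.TTheory GRing.Theory Num.Theory.
Set Implicit Arguments. Unset Strict Implicit. Unset Printing Implicit Defensive.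
Local Open Scope ring_scope.

(* The defining relation of
   beta is (e_lam(t) - 1) B(t) = t e_lam^x(t), and since e_lam(t) - 1 = t + O(t^2)
   it determines B.  The claimed right-hand side is D(t) e_lam^x(t) with
   D(t) = sum_k (sum_j S(k,j) w_j) t^k/k!, w_j = lam^j (1)_{j+1,1/lam}/(j+1),
   so it suffices that (e_lam(t) - 1) D(t) = t.  Let Phi be the linear map on
   polynomials in y with Phi((y)_j) = w_j = (lam)_{j+1} / ((j+1) lam); it sends
   a forward difference Q(y+1) - Q(y) to (Q(lam) - Q(0)) / lam.  By the
   degenerate Vandermonde identity the t^m/m! coefficient of (e_lam(t) - 1) D(t)
   is Phi((y+1)_{m,lam} - (y)_{m,lam}) = ((lam)_{m,lam} - (0)_{m,lam}) / lam,
   which is 1 for m = 1 and 0 otherwise. *)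

Section BinomialConvolution.
Variable R : numFieldType.
Implicit Types f g h : nat -> R.

Definition binconv f g (m : nat) : R :=
  \sum_(k < m.+1) 'C(m, k)%:R * f k * g (m - k)%N.

Definition egf_poly (N : nat) f : {poly R} := \poly_(i < N) (f i / i`!%:R).

Lemma fact_natr_neq0 n : (n`!%:R : R) != 0.
Proof. by rewrite pnatr_eq0 -lt0n fact_gt0. Qed.

Lemma coef_egf_polyM N f g i :
  (i < N)%N -> (egf_poly N f * egf_poly N g)`_i = binconv f g i / i`!%:R.
Proof.
move=> ltiN; rewrite coefM /binconv mulr_suml.
apply: eq_bigr => -[j /=]; rewrite ltnS => leji _.
rewrite !coef_poly (leq_ltn_trans leji ltiN) (leq_ltn_trans (leq_subr j i) ltiN).
have nz_bin : ('C(i, j)%:R : R) != 0 by rewrite pnatr_eq0 -lt0n bin_gt0.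
have := fact_natr_neq0 j; have := fact_natr_neq0 (i - j).
rewrite -(bin_fact leji) !natrM => nz_fj nz_fij.
by field; rewrite nz_bin nz_fj nz_fij.
Qed.

Lemma binconvC f g m : binconv f g m = binconv g f m.
Proof.
apply: (mulIf (invr_neq0 (fact_natr_neq0 m))).
by rewrite -!(@coef_egf_polyM m.+1) // mulrC.
Qed.

Lemma coef_egf_polyM3 N f g h m : (m < N)%N ->
  (egf_poly N f * egf_poly N g * egf_poly N h)`_m = binconv (binconv f g) h m / m`!%:R.
Proof.
move=> ltmN; rewrite -(coef_egf_polyM (binconv f g) h ltmN) !coefM.
apply: eq_bigr => -[j /=].
by rewrite ltnS => lejm _; rewrite coef_egf_polyM ?coef_poly (leq_ltn_trans lejm ltmN).
Qed.

Lemma binconvA f g h m : binconv f (binconv g h) m = binconv (binconv f g) h m.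
Proof.
apply: (mulIf (invr_neq0 (fact_natr_neq0 m))).
by rewrite binconvC -!(@coef_egf_polyM3 m.+1) // mulrC mulrA.
Qed.

Lemma eq_binconv f1 f2 g1 g2 :
  f1 =1 f2 -> g1 =1 g2 -> binconv f1 g1 =1 binconv f2 g2.
Proof. by move=> eq_f eq_g m; apply: eq_bigr => k _; rewrite eq_f eq_g. Qed.

Lemma binconvS f g m :
  binconv f g m.+1 = binconv (fun k => f k.+1) g m + binconv f (fun k => g k.+1) m.
Proof.
rewrite /binconv big_ord_recl [X in _ = _ + X]big_ord_recl /=.
under eq_bigr do rewrite /bump /= add1n binS natrD !mulrDl subSS.
rewrite big_split /= addrA [RHS]addrC; congr (_ + _).
rewrite big_ord_recr /= (bin_small (ltnSn m)) !mul0r addr0 !bin0 !subn0.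
congr (_ + _).
by apply: eq_bigr => -[i ltim] _; rewrite /bump /= add1n subnSK.
Qed.

Lemma binconv_sum_tri f (T : nat -> nat -> R) (w : nat -> R) m :
  binconv f (fun k => \sum_(j < k.+1) T k j * w j) m =
  \sum_(j < m.+1) binconv f (fun k => if (j <= k)%N then T k j else 0) m * w j.
Proof.
rewrite /binconv; under eq_bigr => k _.
  rewrite (big_ord_widen m.+1 (fun j => T _ j * w j)) ?ltnS ?leq_subr // big_mkcond.
  rewrite mulr_sumr; over.
rewrite exchange_big /=; apply: eq_bigr => j _; rewrite mulr_suml.
by apply: eq_bigr => k _; rewrite ltnS; case: ifP; rewrite ?mulr0 ?mul0r // mulrA.
Qed.

Lemma binconv_delta1 g m : binconv (fun k => (k == 1)%:R) g m = m%:R * g m.-1.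
Proof.
case: m => [|m]; first by rewrite /binconv big_ord1 !mulr0 mul0r.
rewrite /binconv !big_ord_recl big1 => [|k _]; last by rewrite mulr0 mul0r.
by rewrite mulr0 mul0r bin1 mulr1 subSS subn0 add0r addr0.
Qed.

Lemma binconv_inj a f g : a 0%N = 0 -> a 1%N = 1 ->
  (forall m, binconv a f m = binconv a g m) -> f =1 g.
Proof.
move=> a0 a1 eq_fg; elim/ltn_ind => i IH.
have := eq_fg i.+1; rewrite /binconv !big_ord_recl a0 !mulr0 !mul0r !add0r /=.
rewrite a1 bin1 mulr1 subSS subn0.
rewrite (eq_bigr (fun k : 'I_i => 'C(i.+1, k.+2)%:R * a k.+2 * g (i.+1 - k.+2)%N)).
  by move/addIr/mulfI; apply; rewrite pnatr_eq0.
move=> -[k ltki] _; rewrite IH // /bump /= !add1n subSS.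
by rewrite ltn_subrL /= (leq_ltn_trans _ ltki).
Qed.

End BinomialConvolution.

Section FallingFactorial.
Variable R : realType.
Implicit Types (y mu : R) (c d : nat -> R).

Lemma dfallS y mu k : dfall y mu k.+1 = dfall y mu k * (y - k%:R * mu).
Proof. by rewrite /dfall big_ord_recr. Qed.

Lemma dfallSl y mu k : dfall y mu k.+1 = y * dfall (y - mu) mu k.
Proof.
rewrite /dfall big_ord_recl /= mul0r subr0; congr (_ * _).
by apply: eq_bigr => i _; rewrite /bump /= add1n -natr1; ring.
Qed.

Lemma dfall0 mu k : dfall 0 mu k = (k == 0)%:R.
Proof. by case: k => [|k]; rewrite ?dfallSl ?mul0r // /dfall big_ord0. Qed.

Lemma dfallD mu a b m : dfall (a + b) mu m = binconv (dfall a mu) (dfall b mu) m.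
Proof.
elim: m a b => [|m IH] a b.
  by rewrite /binconv big_ord1 /dfall !big_ord0 !mulr1.
have shiftl : binconv (fun k => dfall a mu k.+1) (dfall b mu) m = a * dfall (a + b - mu) mu m.
  rewrite addrAC IH /binconv mulr_sumr.
  by apply: eq_bigr => k _; rewrite dfallSl; ring.
have shiftr : binconv (dfall a mu) (fun k => dfall b mu k.+1) m = b * dfall (a + b - mu) mu m.
  rewrite -addrA IH /binconv mulr_sumr.
  by apply: eq_bigr => k _; rewrite dfallSl; ring.
by rewrite binconvS shiftl shiftr dfallSl mulrDl.
Qed.

Lemma ffall0 y : ffall y 0 = 1.
Proof. by rewrite /ffall /dfall big_ord0. Qed.

Lemma ffall_diff y j : ffall (y + 1) j.+1 - ffall y j.+1 = j.+1%:R * ffall y j.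
Proof. by rewrite /ffall dfallSl addrK dfallS -natr1; ring. Qed.

Lemma ffall_natr_eq0 i j : (j < i)%N -> ffall (j%:R : R) i = 0.
Proof.
by move=> ltji; rewrite /ffall /dfall (bigD1 (Ordinal ltji)) //= mulr1 subrr mul0r.
Qed.

Lemma ffall_natr_neq0 j : ffall (j%:R : R) j != 0.
Proof.
rewrite /ffall /dfall; apply/prodf_neq0 => -[i ltij] _ /=.
by rewrite mulr1 -natrB ?(ltnW ltij) // pnatr_eq0 subn_eq0 -ltnNge.
Qed.

Lemma ffall_coef_inj N c d :
  (forall y, \sum_(j < N) c j * ffall y j = \sum_(j < N) d j * ffall y j) ->
  forall j, (j < N)%N -> c j = d j.
Proof.
move=> eq_cd; elim/ltn_ind => j IH ltjN.
have := eq_cd j%:R.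
rewrite (bigD1 (Ordinal ltjN)) // [X in _ = X -> _](bigD1 (Ordinal ltjN)) //=.
rewrite (eq_bigr (fun i : 'I_N => d i * ffall j%:R i)) => [|[i ltiN] /= neij].
  by move/addIr/mulIf; apply; apply: ffall_natr_neq0.
have {neij} : i != j by [].
rewrite neq_ltn => /orP[ltij | ltji]; first by rewrite IH.
by rewrite ffall_natr_eq0 // !mulr0.
Qed.

End FallingFactorial.

Section DegenerateBernoulli.
Variables (R : realType) (lam : R).
Hypothesis lam_neq0 : lam != 0.

(* [dexpm1], [bern_weight] and [dbern_num] are the coefficient sequences of
   e_lam(t) - 1, w and D(t) above. *)
Definition dexpm1 k := dfall 1 lam k - (k == 0)%:R.

Definition bern_weight j := lam ^+ j * dfall 1 lam^-1 j.+1 / j.+1%:R.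

Lemma dexpm1_0 : dexpm1 0 = 0.
Proof. by rewrite /dexpm1 /dfall big_ord0 subrr. Qed.

Lemma dexpm1_1 : dexpm1 1 = 1.
Proof. by rewrite /dexpm1 /dfall big_ord1 mul0r !subr0. Qed.

Lemma binconv_dexpm1_dfall y m :
  binconv dexpm1 (dfall y lam) m = dfall (y + 1) lam m - dfall y lam m.
Proof.
rewrite [y + 1]addrC dfallD /binconv; under eq_bigr do rewrite mulrBr mulrBl.
rewrite sumrB; congr (_ - _).
rewrite big_ord_recl big1 /= => [|k _]; last by rewrite mulr0 mul0r.
by rewrite mulr1 bin0 mul1r subn0 addr0.
Qed.

Lemma natr_mul_bern_weight j : j.+1%:R * bern_weight j = ffall lam j.+1 / lam.
Proof.
have ffallE : ffall lam j.+1 = lam ^+ j.+1 * dfall 1 lam^-1 j.+1.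
  transitivity (\prod_(i < j.+1) (lam * (1 - i%:R / lam))).
    by apply: eq_bigr => i _; rewrite mulrBr !mulr1 mulrCA mulfV // mulr1.
  by rewrite big_split prodr_const card_ord.
by rewrite ffallE /bern_weight exprS; field; rewrite lam_neq0 nat1r pnatr_eq0.
Qed.

Lemma sum_bern_weight_diff M (c d : nat -> R) :
  (forall y, \sum_(j < M.+1) c j * ffall y j =
             \sum_(j < M.+1) d j * (ffall (y + 1) j - ffall y j)) ->
  \sum_(j < M.+1) c j * bern_weight j =
  (\sum_(j < M.+1) d j * (ffall lam j - ffall 0 j)) / lam.
Proof.
move=> eq_cd.
pose e j := if (j < M)%N then d j.+1 * j.+1%:R else 0.
have diffE y : \sum_(j < M.+1) d j * (ffall (y + 1) j - ffall y j) =
               \sum_(j < M.+1) e j * ffall y j.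
  rewrite big_ord_recl [RHS]big_ord_recr /= /e ltnn !ffall0 subrr mulr0 mul0r add0r addr0.
  by apply: eq_bigr => -[j ltjM] _; rewrite /= ltjM ffall_diff mulrA.
have ce j : (j < M.+1)%N -> c j = e j.
  by apply: ffall_coef_inj => y; rewrite eq_cd diffE.
rewrite (eq_bigr (fun j : 'I_M.+1 => e j * bern_weight j)) => [|j _]; last by rewrite ce.
rewrite big_ord_recr [in RHS]big_ord_recl /= /e ltnn !ffall0 subrr mulr0 mul0r add0r addr0.
rewrite mulr_suml; apply: eq_bigr => -[j ltjM] _ /=.
by rewrite ltjM -mulrA natr_mul_bern_weight (@ffall_natr_eq0 R j.+1 0 (ltn0Sn j)) subr0 mulrA.
Qed.

Variable S2 : nat -> nat -> R.
Hypothesis S2P : is_degStirling2 lam S2.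

Definition dbern_num k := \sum_(j < k.+1) S2 k j * bern_weight j.

Lemma binconv_dexpm1_dbern_num m : binconv dexpm1 dbern_num m = (m == 1)%:R.
Proof.
pose c j := binconv dexpm1 (fun k => if (j <= k)%N then S2 k j else 0) m.
have expand (w : nat -> R) :
    binconv dexpm1 (fun k => \sum_(j < k.+1) S2 k j * w j) m = \sum_(j < m.+1) c j * w j.
  exact: binconv_sum_tri.
rewrite /dbern_num expand (sum_bern_weight_diff (c := c) (d := S2 m)) => [|y]; last first.
  rewrite -expand; transitivity (binconv dexpm1 (dfall y lam) m).
    by apply: eq_binconv => // k; rewrite S2P.
  by rewrite binconv_dexpm1_dfall !S2P -sumrB; apply: eq_bigr => j _; rewrite mulrBr.
have -> : \sum_(j < m.+1) S2 m j * (ffall lam j - ffall 0 j) = dfall lam lam m - dfall 0 lam m.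
  by rewrite !S2P -sumrB; apply: eq_bigr => j _; rewrite mulrBr.
case: m {c expand} => [|m]; first by rewrite /dfall !big_ord0 subrr mul0r.
by rewrite dfallSl subrr !dfall0 subr0 [lam * _]mulrC mulfK.
Qed.

End DegenerateBernoulli.

Theorem theorem5 (R : realType) (lam x : R) (n : nat) (hlam : lam != 0)
  (beta : nat -> R) (S2 : nat -> nat -> R)
  (hbeta : is_degBernoulli lam x beta) (hS : is_degStirling2 lam S2) :
  beta n =
  \sum_(j < n.+1)
     (lam ^+ j * dfall 1 lam^-1 j.+1 / j.+1%:R) *
     \sum_(j <= k < n.+1) 'C(n, k)%:R * S2 k j * dfall x lam (n - k)%N.
Proof.
have betaP m : binconv (dexpm1 lam) beta m =
               binconv (dexpm1 lam) (binconv (dbern_num lam S2) (dfall x lam)) m.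
  rewrite binconvA (eq_binconv (binconv_dexpm1_dbern_num hlam hS) (frefl _)).
  by rewrite binconv_delta1; exact: hbeta.
rewrite (binconv_inj (dexpm1_0 lam) (dexpm1_1 lam) betaP n) binconvC binconv_sum_tri.
apply: eq_bigr => j _; rewrite mulrC binconvC big_geq_mkord big_mkcond.
by congr (_ * _); apply: eq_bigr => k _; case: ifP; rewrite ?mulr0 ?mul0r.
Qed.
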